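(* Let $\Lambda$ be a recursive $\varepsilon$-number and let the models $\mathcal{J}$ and $\mathcal{H}$ be as in the context. For every $x\in H$ and every formula $\varphi\in\mathbb{F}$: $\mathcal{J},x\Vdash\varphi$ if and only if $\mathcal{H},x\Vdash\varphi$.
   Context: Fix a recursive ordinal $\Lambda$ that is an $\varepsilon$-number ($\omega^\Lambda=\Lambda$). Formulas: $\mathbb{F}$ is the smallest set containing $\top$, closed under $\wedge$, and such that if $\varphi\in\mathbb{F}$, $n<\omega$, $\alpha<\Lambda$ then $\langle n^\alpha\rangle\varphi\in\mathbb{F}$. The ordinal logarithm: $\ell(0)=0$, $\ell(\alpha+\omega^\beta)=\beta$. An $\ell$-sequence is an $\omega$-sequence of ordinals $x=\langle x_0,x_1,\dots\rangle$ with $x_{i+1}\le\ell(x_i)$ for all $i$. $I$ is the set of $\ell$-sequences with all entries $<\Lambda$; $H\subseteq I$ is the set of $x\in I$ with $x_j=0$ for some $j$. For $n<\omega$, $x R_n y$ (on $I$) and $x S_n y$ (on $H$) both mean: $x_m>y_m$ for all $m\le n$ and $x_i\ge y_i$ for all $i>n$. $R_n^\alpha$ on $I$: $xR_n^0y$ iff $x=y$; $xR_n^{1+\alpha}y$ iff for every $\beta<1+\alpha$ there is $z\in I$ with $xR_nz$ and $zR_n^\beta y$. $S_n^\alpha$ on $H$: same with $S_n$ and $z\in H$. The model $\mathcal{J}=\langle I,\{R_n\}\rangle$ has forcing: $x\Vdash\top$ always; $x\Vdash\varphi\wedge\psi$ iff $x\Vdash\varphi$ and $x\Vdash\psi$;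 $x\Vdash\langle n^\alpha\rangle\varphi$ iff there is $y\in I$ with $xR_n^\alpha y$ and $y\Vdash\varphi$. The model $\mathcal{H}=\langle H,\{S_n\}\rangle$ has the same clauses with $y\in H$ and $S_n^\alpha$ in place of $R_n^\alpha$. *)

(* Ordinals below the recursive epsilon-number Lambda are
   represented by natural numbers (codes) ordered by a computable strict
   well-order  W : nat -> nat -> bool  of order type Lambda.  Ordinal
   arithmetic (addition, omega-exponentiation, the ordinal logarithm) is
   defined order-theoretically on this well-order. *)
From Stdlib Require Import Arith.

Section Ord.
Variable W : nat -> nat -> bool.

Definition olt (a b : nat) : Prop := W a b = true.
Definition ole (a b : nat) : Prop := olt a b \/ a = b.

Definition is_wellorder : Prop :=
  (forall a, ~ olt a a) /\
  (forall a b c, olt a b -> olt b c -> olt a c) /\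
  (forall a b, olt a b \/ a = b \/ olt b a) /\
  well_founded olt.

Definition iszero (z : nat) : Prop := forall y, ~ olt y z.

Definition ordiso (A B : nat -> Prop) : Prop :=
  exists f : nat -> nat,
    (forall a, A a -> B (f a)) /\
    (forall b, B b -> exists a, A a /\ f a = b) /\
    (forall a a', A a -> A a' -> olt a a' -> olt (f a) (f a')).

(* ordinal addition:  oadd a b c  iff  a + b = c
   (c >= a and the interval [a, c) has order type b) *)
Definition oadd (a b c : nat) : Prop :=
  ole a c /\ ordiso (fun x => ole a x /\ olt x c) (fun x => olt x b).

Definition indecomp (p : nat) : Prop :=
  ~ iszero p /\ forall a, olt a p -> oadd a p p.

(* oexp b p  iff  p = omega^b  (p is the b-th additively indecomposable) *)
Definition oexp (b p : nat) : Prop :=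
  indecomp p /\ ordiso (fun q => indecomp q /\ olt q p) (fun x => olt x b).

(* ordinal logarithm:  ell g b  iff  l(g) = b,
   where l(0) = 0 and l(d + omega^b) = b *)
Definition ell (g b : nat) : Prop :=
  (iszero g /\ iszero b) \/ (exists d p, oexp b p /\ oadd d p g).

(* Lambda = order type of W is an epsilon-number (omega^Lambda = Lambda):
   equivalently Lambda is a limit and omega^b < Lambda for every b < Lambda. *)
Definition is_epsilon_order : Prop :=
  is_wellorder /\
  (forall a, exists c, olt a c) /\
  (forall b, exists p, oexp b p).

Definition seqo := nat -> nat.

Definition inI (x : seqo) : Prop :=
  forall i b, ell (x i) b -> ole (x (S i)) b.

Definition inH (x : seqo) : Prop := inI x /\ exists j, iszero (x j).

(* x R_n y  (also used as S_n on H) *)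
Definition Rn (n : nat) (x y : seqo) : Prop :=
  (forall m, m <= n -> olt (y m) (x m)) /\
  (forall i, n < i -> ole (y i) (x i)).

Inductive Rpow (D : seqo -> Prop) (R : seqo -> seqo -> Prop)
  : nat -> seqo -> seqo -> Prop :=
| Rpow_zero : forall a x y, iszero a -> (forall i, x i = y i) -> Rpow D R a x y
| Rpow_succ : forall a x y, ~ iszero a ->
    (forall b, olt b a -> exists z, D z /\ R x z /\ Rpow D R b z y) ->
    Rpow D R a x y.

End Ord.

(* formulas: top, conjunction,  <n^alpha> phi  (alpha an ordinal code < Lambda) *)
Inductive form : Type :=
| FTop : form
| FAnd : form -> form -> form
| FDia : nat -> nat -> form -> form.

Fixpoint forces (W : nat -> nat -> bool) (D : seqo -> Prop) (x : seqo) (phi : form)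
  : Prop :=
  match phi with
  | FTop => True
  | FAnd p q => forces W D x p /\ forces W D x q
  | FDia n a p =>
      exists y, D y /\ Rpow W D (Rn W n) a x y /\ forces W D y p
  end.

Definition forcesJ W x phi := forces W (inI W) x phi.
Definition forcesH W x phi := forces W (inH W) x phi.

(** The models differ only in their domains, and [H] is closed under every
    [S_n]-step: an entry equal to [0] cannot decrease at an index [m <= n]
    and stays [0] at an index [m > n].  Hence every [R_n^alpha]-path of [J]
    starting in [H] already lies in [H], so it is an [S_n^alpha]-path, and
    conversely every [S_n^alpha]-path is an [R_n^alpha]-path.  Neither the ordinal arithmetic nor
    the well-foundedness of [Lambda] plays any role. *)
From Stdlib Require Import Arith Classical.

(* The recursive occurrence of [Rpow] sits under [exists] and [/\], so the
   automatically generated scheme carries no induction hypothesis for it. *)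
Fixpoint Rpow_nested_ind W (D : seqo -> Prop) (R : seqo -> seqo -> Prop)
  (P : nat -> seqo -> seqo -> Prop)
  (Hzero : forall a x y, iszero W a -> (forall i, x i = y i) -> P a x y)
  (Hsucc : forall a x y, ~ iszero W a ->
     (forall b, olt W b a -> exists z, D z /\ R x z /\ Rpow W D R b z y /\ P b z y) ->
     P a x y)
  a x y (h : Rpow W D R a x y) {struct h} : P a x y :=
  match h with
  | Rpow_zero _ _ _ a x y a0 exy => Hzero a x y a0 exy
  | Rpow_succ _ _ _ a x y a_nz steps =>
      Hsucc a x y a_nz (fun b lt_ba =>
        match steps b lt_ba with
        | ex_intro _ z (conj Dz (conj Rxz hzy)) =>
            ex_intro _ z (conj Dz (conj Rxz
              (conj hzy (Rpow_nested_ind W D R P Hzero Hsucc b z y hzy))))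
        end)
  end.

Section RpowTransfer.
Variables (W : nat -> nat -> bool) (R : seqo -> seqo -> Prop).

Lemma Rpow_sub_domain (D D' : seqo -> Prop) a x y :
  (forall z, D z -> D' z) -> Rpow W D R a x y -> Rpow W D' R a x y.
Proof.
  intros DD' h; induction h as [a x y a0 exy|a x y a_nz steps] using Rpow_nested_ind.
  - apply Rpow_zero; assumption.
  - apply Rpow_succ; [assumption|].
    intros b lt_ba; destruct (steps b lt_ba) as [z [Dz [Rxz [_ IH]]]].
    exists z; auto.
Qed.

Section Invariant.
Variable P : seqo -> Prop.
Hypothesis P_step : forall x z, P x -> R x z -> P z.
Hypothesis P_ext : forall x y, (forall i, x i = y i) -> P x -> P y.

Lemma Rpow_restrict_domain (D : seqo -> Prop) a x y :
  Rpow W D R a x y -> P x -> Rpow W (fun z => D z /\ P z) R a x y.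
Proof.
  intros h; induction h as [a x y a0 exy|a x y a_nz steps] using Rpow_nested_ind.
  - intros _; apply Rpow_zero; assumption.
  - intros Px; apply Rpow_succ; [assumption|].
    intros b lt_ba; destruct (steps b lt_ba) as [z [Dz [Rxz [_ IH]]]].
    assert (Pz : P z) by exact (P_step x z Px Rxz).
    exists z; auto.
Qed.

Lemma Rpow_invariant (D : seqo -> Prop) a x y :
  Rpow W D R a x y -> P x -> P y.
Proof.
  intros h; induction h as [a x y _ exy|a x y a_nz steps] using Rpow_nested_ind.
  - exact (P_ext x y exy).
  - intros Px.
    destruct (not_all_not_ex _ _ a_nz) as [b lt_ba].
    destruct (steps b lt_ba) as [z [_ [Rxz [_ IH]]]].
    exact (IH (P_step x z Px Rxz)).
Qed.

End Invariant.
End RpowTransfer.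

Lemma forces_restrict_domain W (D P : seqo -> Prop) :
  (forall n x z, P x -> Rn W n x z -> P z) ->
  (forall x y, (forall i, x i = y i) -> P x -> P y) ->
  forall phi x, P x -> forces W D x phi <-> forces W (fun z => D z /\ P z) x phi.
Proof.
  intros P_step P_ext phi.
  induction phi as [|p IHp q IHq|n a p IHp]; intros x Px; simpl.
  - tauto.
  - rewrite (IHp x Px), (IHq x Px); tauto.
  - split.
    + intros [y [Dy [Rxy Fy]]].
      assert (Py : P y) by exact (Rpow_invariant W _ P (P_step n) P_ext D a x y Rxy Px).
      exists y; split; [auto|]; split.
      * exact (Rpow_restrict_domain W _ P (P_step n) D a x y Rxy Px).
      * apply IHp; assumption.
    + intros [y [[Dy Py] [Rxy Fy]]].
      exists y; split; [exact Dy|]; split.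
      * exact (Rpow_sub_domain W _ _ D a x y (fun z Hz => proj1 Hz) Rxy).
      * apply IHp; assumption.
Qed.

Definition has_zero W (x : seqo) : Prop := exists j, iszero W (x j).

Lemma has_zero_Rn W n x z : has_zero W x -> Rn W n x z -> has_zero W z.
Proof.
  intros [j xj0] [lt_le_n le_gt_n]; exists j.
  destruct (Nat.le_gt_cases j n) as [le_jn|gt_jn].
  - destruct (xj0 _ (lt_le_n j le_jn)).
  - destruct (le_gt_n j gt_jn) as [lt_zx|eq_zx].
    + destruct (xj0 _ lt_zx).
    + rewrite eq_zx; exact xj0.
Qed.

Lemma has_zero_ext W x y : (forall i, x i = y i) -> has_zero W x -> has_zero W y.
Proof. intros exy [j xj0]; exists j; rewrite <- exy; exact xj0. Qed.

Theorem theorem5p1 (W : nat -> nat -> bool) (HW : is_epsilon_order W)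
  (x : seqo) (Hx : inH W x) (phi : form) :
  forcesJ W x phi <-> forcesH W x phi.
Proof.
  exact (forces_restrict_domain W (inI W) (has_zero W)
           (has_zero_Rn W) (has_zero_ext W) phi x (proj2 Hx)).
Qed.
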